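(* Let $\mathcal{H}$ be a separable Hilbert space and let $\{f_n\}_{n=1}^\infty$ be a pseudo-Riesz basis for $\mathcal{H}$. If $\{g_n\}_{n=1}^\infty$ is a sequence in $\mathcal{H}$ with $\sum_{n=1}^\infty\|f_n-g_n\|^2<\infty$, then $\{g_n\}$ is also a pseudo-Riesz basis for $\mathcal{H}$.
   Context: A Bessel sequence $\{f_n\}$ in $\mathcal{H}$ is a pseudo-Riesz basis if there are a finite set $\sigma\subseteq\mathbb{N}$ and finitely many vectors $h_1,\dots,h_m\in\mathcal{H}$ such that $\{f_n\}_{n\notin\sigma}\cup\{h_1,\dots,h_m\}$ is a Riesz basis for $\mathcal{H}$. *)

From HB Require Import structures.
From mathcomp Require Import all_boot all_order all_algebra.
From mathcomp Require Import complex.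
From mathcomp Require Import all_classical all_reals all_analysis.
Import Order.TTheory GRing.Theory Num.Theory.
Import numFieldNormedType.Exports.

Set Implicit Arguments.
Unset Strict Implicit.
Unset Printing Implicit Defensive.

Local Open Scope ring_scope.
Local Open Scope classical_set_scope.

Section HilbertDefs.
Variable R : realType.
Variable V : completeNormedModType R[i].

(* ip is an inner product (linear in the first argument, conjugate
   symmetric) inducing the norm of V: <x,x> = ||x||^2.  Together with the
   completeness of V this makes (V, ip) a complex Hilbert space. *)
Definition inner_product (ip : V -> V -> R[i]) : Prop :=
  [/\ forall (a : R[i]) (x y z : V), ip (a *: x + y) z = a * ip x z + ip y z,
      forall x y : V, ip y x = (ip x y)^*
    & forall x : V, ip x x = `|x| ^+ 2].

Definition separable : Prop :=
  exists D : set V, countable D /\ closure D = setT.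

Definition lin_span (I : Type) (u : I -> V) : set V :=
  [set x | exists (s : seq I) (c : I -> R[i]), x = \sum_(i <- s) c i *: u i].

Definition orthonormal_basis (ip : V -> V -> R[i]) (I : eqType) (u : I -> V)
  : Prop :=
  (forall i j : I, ip (u i) (u j) = (i == j)%:R) /\
  closure (lin_span u) = setT.

Definition bounded_linear_op (U : V -> V) : Prop :=
  (forall (a : R[i]) (x y : V), U (a *: x + y) = a *: U x + U y) /\
  exists M : R[i], forall x : V, `|U x| <= M * `|x|.

Definition riesz_basis (ip : V -> V -> R[i]) (I : eqType) (e : I -> V)
  : Prop :=
  exists (u : I -> V) (U : V -> V),
    [/\ orthonormal_basis ip u, bounded_linear_op U, bijective U
      & forall i, e i = U (u i)].

Definition bessel_seq (ip : V -> V -> R[i]) (f : nat -> V) : Prop :=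
  exists B : R[i], 0 < B /\
    forall (x : V) (N : nat), \sum_(n < N) `|ip x (f n)| ^+ 2 <= B * `|x| ^+ 2.

(* index type  {n | n notin sigma} + {1..m}  of the family
   {f_n}_{n notin sigma} U {h_1,...,h_m} *)
Definition pr_index (sigma : seq nat) (m : nat) : eqType :=
  ({n : nat | n \notin sigma} + 'I_m)%type.

Definition pr_family (f : nat -> V) (sigma : seq nat) (m : nat)
  (h : 'I_m -> V) : pr_index sigma m -> V :=
  fun k => match k with inl n => f (sval n) | inr j => h j end.

Definition pseudo_riesz_basis (ip : V -> V -> R[i]) (f : nat -> V) : Prop :=
  bessel_seq ip f /\
  exists (sigma : seq nat) (m : nat) (h : 'I_m -> V),
    riesz_basis ip (@pr_family f sigma m h).

End HilbertDefs.

From HB Require Import structures.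
From mathcomp Require Import all_boot all_order all_algebra.
From mathcomp Require Import complex.
From mathcomp Require Import all_classical all_reals all_analysis.
From mathcomp Require Import lra ring.
Import Order.TTheory GRing.Theory Num.Theory.
Import numFieldNormedType.Exports.
Local Open Scope ring_scope.
Local Open Scope classical_set_scope.

Set Implicit Arguments.
Unset Strict Implicit.
Unset Printing Implicit Defensive.

Local Notation "x %:C" := (real_complex _ x) : ring_scope.

(* Write the Riesz basis {f_n}_{n notin sigma} U {h_j} as U u, with u an
   orthonormal basis and U a bounded bijection.  By the open mapping theorem
   (derived here from Baire's theorem) U^-1 is bounded, say by A.  Put
   delta = 1/(2A+2) and choose N0 so that sum_{n >= N0} |g_n - f_n|^2 <=
   delta^2.  With d_n = g_n - f_n for n >= N0 and d_n = 0 otherwise, the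
   operator K x = sum_{n notin sigma} <x, u_n> d_n has norm at most delta, so
   U + K is again a bounded bijection (its inverse is built by successive
   approximation), and U + K sends u to the family {f_n + d_n} U {h_j}.
   Finally the finitely many vectors g_n = f_n + d_n with n < N0 are moved
   from the sequence into the finite part.  The Bessel bound for g follows
   from the one for f by Cauchy-Schwarz. *)

Lemma sqr_normB_le (C : numDomainType) (a b : C) :
  `|a - b| ^+ 2 <= 2 * `|a| ^+ 2 + 2 * `|b| ^+ 2.
Proof.
apply: (@le_trans _ _ ((`|a| + `|b|) ^+ 2)).
  by rewrite lerXn2r ?nnegrE ?addr_ge0 ?ler_normB.
rewrite -subr_ge0 (_ : _ - _ = (`|a| - `|b|) ^+ 2); last by rewrite sqrrD sqrrB; ring.
by rewrite -real_normK ?realB ?exprn_ge0.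
Qed.

Lemma mul_le_weighted_sqr (R : realFieldType) (a b s : R) : 0 < s ->
  a * b <= (s * a ^+ 2 + s^-1 * b ^+ 2) / 2.
Proof.
move=> s_gt0; have ssV : s * s^-1 = 1 by rewrite mulfV ?gt_eqF.
have : 0 <= (s * a - b) ^+ 2 * s^-1 by rewrite mulr_ge0 ?sqr_ge0 ?invr_ge0 ?ltW.
have := sqr_ge0 (s * a - b); nra.
Qed.

Lemma scale_linear (C : comNzRingType) (V : lmodType C) (a : C) :
  linear (fun v : V => a *: v).
Proof. by move=> b u v; rewrite scalerDr !scalerA mulrC. Qed.

Lemma inj_surj_bijective (A B : Type) (f : A -> B) :
  injective f -> (forall y, exists x, f x = y) -> bijective f.
Proof.
move=> f_inj /choice [g fgK]; exists g => [x|y]; last exact: fgK.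
by apply: f_inj; rewrite fgK.
Qed.

Definition linear_pack (R : pzRingType) (X Y : lmodType R) (f : X -> Y)
  (f_lin : linear f) : {linear X -> Y} :=
  HB.pack f (GRing.isLinear.Build R X Y *:%R f f_lin).

Lemma bounded_series_tail (R : realType) (a : nat -> R) (B e : R) :
  (forall n, 0 <= a n) -> (forall N, \sum_(n < N) a n <= B) -> 0 < e ->
  exists N0, forall N, \sum_(n < N) (if (N0 <= n)%N then a n else 0) <= e.
Proof.
move=> a_ge0 a_le e_gt0.
have a_nd : nondecreasing_seq (series a) by apply: nondecreasing_series => n _ _.
have a_cvg : cvgn (series a).
  apply: nondecreasing_is_cvgn => //; exists B => _ [n _ <-].
  by rewrite /series /= big_mkord.
have /cvgrPdist_lt /(_ e e_gt0) [N0 _ N0_close] :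
  series a @ \oo --> limn (series a) := a_cvg.
exists N0 => N; rewrite -big_mkcond -(big_geq_mkord N0 N xpredT).
have [NN0|N0N] := leqP N N0; first by rewrite big_geq // ltW.
rewrite -sub_series_geq; last exact: ltnW.
have := nondecreasing_cvgn_le a_nd a_cvg N.
have := ler_norm (limn (series a) - series a N0).
have := N0_close N0 (leqnn _); lra.
Qed.

Section RealNorm.
Variables (R : realType) (V : normedModType R[i]).

Definition rnorm (W : normedZmodType R[i]) (x : W) : R := complex.Re `|x|.

Lemma rnormE (W : normedZmodType R[i]) (x : W) : (rnorm x)%:C = `|x|.
Proof. exact/RRe_real/normr_real. Qed.

Lemma rnorm_ge0 (W : normedZmodType R[i]) (x : W) : 0 <= rnorm x.
Proof. by rewrite -lecR rmorph0 rnormE. Qed.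

Lemma rnorm0 (W : normedZmodType R[i]) : rnorm (0 : W) = 0.
Proof. by rewrite /rnorm normr0. Qed.

Lemma sum_rnorm_sqr_le (W : normedZmodType R[i]) (x : nat -> W) (M : R[i]) N :
  \sum_(n < N) `|x n| ^+ 2 <= M -> \sum_(n < N) rnorm (x n) ^+ 2 <= complex.Re M.
Proof.
have -> : \sum_(n < N) `|x n| ^+ 2 = (\sum_(n < N) rnorm (x n) ^+ 2)%:C.
  by rewrite rmorph_sum; apply: eq_bigr => n _; rewrite rmorphXn /= rnormE.
by rewrite lecE => /andP[_].
Qed.

Lemma rnormD (x y : V) : rnorm (x + y) <= rnorm x + rnorm y.
Proof. by rewrite -lecR rmorphD /= !rnormE ler_normD. Qed.

Lemma rnormZ (a : R[i]) (x : V) : rnorm (a *: x) = rnorm a * rnorm x.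
Proof. by apply: complexI; rewrite rmorphM /= !rnormE normrZ. Qed.

Lemma rnormN (x : V) : rnorm (- x) = rnorm x.
Proof. by rewrite /rnorm normrN. Qed.

Lemma rnorm_eq0 (x : V) : rnorm x = 0 -> x = 0.
Proof. by move=> x0; apply/normr0_eq0; rewrite -rnormE x0. Qed.

Lemma rnorm_real (r : R) : rnorm r%:C = `|r|.
Proof. by apply: complexI; rewrite rnormE normc_def /= expr0n addr0 sqrtr_sqr. Qed.

End RealNorm.

Section Realify.
Variables (R : realType) (V : completeNormedModType R[i]).

(* The underlying real Banach space of V: Baire's theorem and the results on
   series in the library are stated over real scalars. *)
Definition realify : Type := V.
HB.instance Definition _ := GRing.Zmodule.on realify.

Definition realify_scale (r : R) (x : realify) : realify := r%:C *: (x : V).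

Lemma realify_scaleA a b x :
  realify_scale a (realify_scale b x) = realify_scale (a * b) x.
Proof. by rewrite /realify_scale scalerA -rmorphM. Qed.

Lemma realify_scale1 : left_id 1 realify_scale.
Proof. by move=> x; rewrite /realify_scale scale1r. Qed.

Lemma realify_scaleDr : right_distributive realify_scale +%R.
Proof. by move=> a x y; rewrite /realify_scale scalerDr. Qed.

Lemma realify_scaleDl x : {morph realify_scale^~ x : a b / a + b}.
Proof. by move=> a b; rewrite /realify_scale rmorphD scalerDl. Qed.

HB.instance Definition _ := GRing.Zmodule_isLmodule.Build R realify
  realify_scaleA realify_scale1 realify_scaleDr realify_scaleDl.

Lemma realify_normZ (r : R) (x : realify) :
  @rnorm R V (r *: x) = `|r| * rnorm (x : V).
Proof. by rewrite rnormZ rnorm_real. Qed.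

HB.instance Definition _ := Lmodule_isNormed.Build R realify
  (@rnormD R V) realify_normZ (@rnorm_eq0 R V).

Lemma realify_normE (x : realify) : `|x| = rnorm (x : V).
Proof. by []. Qed.

Lemma realify_ballE (x y : V) (e : R) :
  ball (x : realify) e (y : realify) <-> ball x e%:C y.
Proof. by rewrite -!ball_normE /ball_ /= -rnormE ltcR. Qed.

Lemma realify_complete (F : set_system realify) :
  ProperFilter F -> cauchy F -> cvg F.
Proof.
move=> F_proper /cauchyP F_cauchy.
have /cauchy_cvg /cvg_ex[l Fl] : cauchy (F : set_system V).
  apply/cauchy_exP => e e_gt0.
  have Re_gt0 : 0 < complex.Re e by move: e_gt0; rewrite ltcE => /andP[].
  have [x Fx] := F_cauchy _ Re_gt0.
  exists x; apply: filterS Fx => y /realify_ballE.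
  by rewrite RRe_real // gtr0_real.
apply/cvg_ex; exists (l : realify); apply/cvg_ballP => e e_gt0.
move: Fl => /cvg_ballP /(_ e%:C); rewrite ltcR => /(_ e_gt0).
by apply: filterS => y /realify_ballE.
Qed.

HB.instance Definition _ := Uniform_isComplete.Build realify realify_complete.

End Realify.

Section InnerProduct.
Variables (R : realType) (V : completeNormedModType R[i]) (ip : V -> V -> R[i]).
Hypothesis ip_inner : inner_product ip.

Lemma ipPl a x y z : ip (a *: x + y) z = a * ip x z + ip y z.
Proof. by case: ip_inner. Qed.

Lemma ipC x y : ip y x = (ip x y)^*.
Proof. by case: ip_inner. Qed.

Lemma ip_self x : ip x x = `|x| ^+ 2.
Proof. by case: ip_inner. Qed.

Lemma ipDl x y z : ip (x + y) z = ip x z + ip y z.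
Proof. by have := ipPl 1 x y z; rewrite scale1r mul1r. Qed.

Lemma ip0l z : ip 0 z = 0.
Proof. by apply/(addrI (ip 0 z)); rewrite -ipDl !addr0. Qed.

Lemma ipZl a x z : ip (a *: x) z = a * ip x z.
Proof. by rewrite -[a *: x]addr0 ipPl ip0l addr0. Qed.

Lemma ipBl x y z : ip (x - y) z = ip x z - ip y z.
Proof. by rewrite -scaleN1r addrC ipPl mulN1r addrC. Qed.

Lemma ip0r z : ip z 0 = 0.
Proof. by rewrite ipC ip0l conjC0. Qed.

Lemma ipDr x y z : ip z (x + y) = ip z x + ip z y.
Proof. by rewrite ipC ipDl rmorphD /= -!ipC. Qed.

Lemma ipZr a x z : ip z (a *: x) = a^* * ip z x.
Proof. by rewrite ipC ipZl rmorphM /= -ipC. Qed.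

Lemma ipBr x y z : ip z (x - y) = ip z x - ip z y.
Proof. by rewrite ipC ipBl rmorphB /= -!ipC. Qed.

Lemma ip_suml (I : Type) (s : seq I) (c : I -> R[i]) (w : I -> V) z :
  ip (\sum_(i <- s) c i *: w i) z = \sum_(i <- s) c i * ip (w i) z.
Proof.
elim: s => [|a s IH]; first by rewrite !big_nil ip0l.
by rewrite !big_cons ipPl IH.
Qed.

Lemma ip_sumr (I : Type) (s : seq I) (c : I -> R[i]) (w : I -> V) z :
  ip z (\sum_(i <- s) c i *: w i) = \sum_(i <- s) (c i)^* * ip z (w i).
Proof.
elim: s => [|a s IH]; first by rewrite !big_nil ip0r.
by rewrite !big_cons ipDr ipZr IH.
Qed.

Lemma bessel_ineq (I : eqType) (s : seq I) (w : I -> V) x :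
  uniq s -> {in s &, forall i j, ip (w i) (w j) = (i == j)%:R} ->
  \sum_(i <- s) `|ip x (w i)| ^+ 2 <= `|x| ^+ 2.
Proof.
move=> s_uniq w_on.
pose c i := ip x (w i); pose p := \sum_(i <- s) c i *: w i.
have normE : \sum_(i <- s) `|c i| ^+ 2 = \sum_(i <- s) c i * (c i)^*.
  by apply: eq_bigr => i _; rewrite normCK.
have ip_xp : ip x p = \sum_(i <- s) c i * (c i)^*.
  by rewrite ip_sumr; apply: eq_bigr => i _; rewrite mulrC.
have ip_px : ip p x = \sum_(i <- s) c i * (c i)^*.
  by rewrite ip_suml; apply: eq_bigr => i _; rewrite -ipC.
have ip_pp : ip p p = \sum_(i <- s) c i * (c i)^*.
  rewrite ip_suml big_seq [RHS]big_seq; apply: eq_bigr => i si.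
  rewrite ip_sumr (bigD1_seq i) //= w_on // eqxx mulr1 big1_seq ?addr0 //.
  by move=> j /andP[ji sj]; rewrite w_on // eq_sym (negbTE ji) mulr0.
have : 0 <= ip (x - p) (x - p) by rewrite ip_self exprn_ge0.
by rewrite ipBl !ipBr ip_xp ip_px ip_pp ip_self subrr subr0 subr_ge0 normE.
Qed.

Lemma cauchy_schwarz x y : `|ip x y| ^+ 2 <= `|x| ^+ 2 * `|y| ^+ 2.
Proof.
have [->|y0] := eqVneq y 0; first by rewrite ip0r normr0 !expr2 !mulr0.
have ny_gt0 : 0 < `|y| by rewrite normr_gt0.
have ny_real : `|y|^-1^* = `|y|^-1 by rewrite geC0_conj // invr_ge0 ltW.
pose e := `|y|^-1 *: y.
have ee : ip e e = 1.
  by rewrite ipZl ipZr ny_real ip_self mulrA -expr2 -exprMn mulVf ?gt_eqF ?expr1n.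
have := @bessel_ineq unit [:: tt] (fun=> e) x erefl (fun _ _ _ _ => ee).
rewrite big_seq1 ipZr ny_real normrM normfV normr_id exprMn exprVn.
by rewrite ler_pdivrMl ?exprn_gt0 // mulrC.
Qed.

Lemma bessel_seq_perturb (f g : nat -> V) :
  bessel_seq ip f ->
  (exists M : R[i], forall N : nat, \sum_(n < N) `|f n - g n| ^+ 2 <= M) ->
  bessel_seq ip g.
Proof.
move=> [B [B_gt0 f_bessel]] [M fg_le].
have M_ge0 : 0 <= M by have := fg_le 0%N; rewrite big_ord0.
exists (2 * B + 2 * M); split; first by rewrite ltr_wpDr ?mulr_ge0 ?pmulr_rgt0.
move=> x N; rewrite mulrDl.
have termwise n : `|ip x (g n)| ^+ 2 <=
    2 * `|ip x (f n)| ^+ 2 + 2 * (`|x| ^+ 2 * `|f n - g n| ^+ 2).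
  have -> : ip x (g n) = ip x (f n) - ip x (f n - g n) by rewrite ipBr opprB addrC subrK.
  by rewrite (le_trans (sqr_normB_le _ _)) // lerD2l ler_pM2l // cauchy_schwarz.
apply: (le_trans (ler_sum _ (fun (n : 'I_N) _ => termwise n))).
rewrite big_split /= -!mulr_sumr -[2 * B * _]mulrA -[2 * M * _]mulrA.
apply: lerD; rewrite ler_pM2l //; first exact: f_bessel.
by rewrite mulrC; apply: ler_wpM2r; [rewrite exprn_ge0 | exact: fg_le].
Qed.

End InnerProduct.

Section SuccessiveApproximation.
Variables (R : realType) (X : completeNormedModType R) (T : {linear X -> X}).
Variable M : R.
Hypothesis T_bounded : forall x, `|T x| <= M * `|x|.

Lemma bounded_linear_cont : continuous T.
Proof.
apply/bounded_linear_continuous/linear_boundedP; near=> r => x.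
apply: le_trans (T_bounded x) _; apply: ler_wpM2r => //.
Unshelve. all: by end_near. Qed.

Lemma limn_series_solve (u r : nat -> X) y :
  (forall n, T (series u n) = y - r n) ->
  cvgn [normed series u] -> r @ \oo --> 0 -> T (limn (series u)) = y.
Proof.
move=> Tseries u_cvg r_cvg0.
have Tu_cvg : T \o series u @ \oo --> T (limn (series u)).
  by apply: continuous_cvg; [exact: bounded_linear_cont | exact: normed_cvg].
have Tu_to_y : T \o series u @ \oo --> y.
  rewrite (_ : T \o series u = fun n => y - r n); last exact: funext Tseries.
  by rewrite -[y in _ --> y]subr0; exact: cvgB (cvg_cst _) r_cvg0.
exact: cvg_unique Tu_cvg Tu_to_y.
Qed.

Lemma successive_approximation (C : R) : 0 <= C ->
  (forall y, exists x, `|x| <= C * `|y| /\ `|y - T x| <= `|y| / 2) ->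
  forall y, exists x, T x = y /\ `|x| <= 2 * C * `|y|.
Proof.
move=> C_ge0 approx y.
(* r k is the k-th residual and u k = S (r k) the k-th correction; the
   corrections form a norm-convergent series whose sum solves T x = y. *)
have [S S_approx] := choice approx.
pose r k := iter k (fun z => z - T (S z)) y.
pose u k := S (r k).
have half_lt1 : `|2^-1 : R| < 1 by rewrite ger0_norm ?invf_lt1 ?ltr1n.
have r_le k : `|r k| <= geometric `|y| 2^-1 k.
  elim: k => [|k IH]; first by rewrite /= expr0 mulr1.
  apply: le_trans (proj2 (S_approx _)) _.
  by rewrite /geometric /= exprSr mulrA ler_wpM2r ?invr_ge0.
have u_le k : `|u k| <= geometric (C * `|y|) 2^-1 k.
  by apply: le_trans (proj1 (S_approx _)) _; rewrite /= -mulrA ler_wpM2l.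
have u_normed_cvg : cvgn [normed series u].
  apply: (series_le_cvg (fun n => normr_ge0 _) _ u_le).
    by move=> n; rewrite geometric_ge0 ?mulr_ge0 ?invr_ge0.
  exact: is_cvg_geometric_series.
have Tseries n : T (series u n) = y - r n.
  elim: n => [|n IH]; first by rewrite /series /= big_geq // linear0 subrr.
  by rewrite seriesSr linearD IH /= opprB addrA addrAC.
have r_cvg0 : r @ \oo --> 0.
  apply/cvgrPdist_lt => e e_gt0.
  move/cvgrPdist_lt: (cvg_geometric `|y| half_lt1) => /(_ e e_gt0).
  apply: filterS => n; rewrite !sub0r !normrN => geo_lt.
  exact: le_lt_trans (r_le n) (le_lt_trans (ler_norm _) geo_lt).
exists (limn (series u)); split.
  exact: (limn_series_solve Tseries u_normed_cvg r_cvg0).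
apply: (le_trans (lim_series_norm u_normed_cvg)).
apply: limr_le; first exact: u_normed_cvg.
apply: nearW => n.
apply: (@le_trans _ _ (series (geometric (C * `|y|) 2^-1) n)).
  by apply: ler_sum_nat => k _; exact: u_le.
have half_gt0 : 0 < 2^-1 :> R by rewrite invr_gt0.
have Cy_ge0 : 0 <= C * `|y| by rewrite mulr_ge0.
apply: le_trans (geometric_le_lim n Cy_ge0 half_gt0 half_lt1) _.
rewrite (_ : 1 - 2^-1 = 2^-1 :> R); last lra.
by rewrite invrK mulrC mulrA.
Qed.

End SuccessiveApproximation.

Section OpenMapping.
Variables (R : realType) (X : completeNormedModType R) (T : {linear X -> X}).

(* The closure of the image of the closed ball of radius t. *)
Definition approx_image (t : R) : set X :=
  [set y | forall e, 0 < e -> exists x, `|x| <= t /\ `|y - T x| < e].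

Lemma approx_image_closed t : closed (approx_image t).
Proof.
move=> y y_cl e e_gt0.
have e2_gt0 : 0 < e / 2 by rewrite divr_gt0.
have [z [z_approx /= yz]] := y_cl _ (nbhsx_ballx y _ e2_gt0).
have [x [x_le zx]] := z_approx _ e2_gt0.
exists x; split => //; move: yz; rewrite -ball_normE /= => yz.
by apply: le_lt_trans (ler_distD z y (T x)) _; lra.
Qed.

Lemma approx_image0 t : 0 <= t -> approx_image t 0.
Proof. by move=> t_ge0 e e_gt0; exists 0; rewrite linear0 subrr !normr0. Qed.

Lemma approx_imageZ k t y : 0 < k ->
  approx_image t y -> approx_image (k * t) (k *: y).
Proof.
move=> k_gt0 yt e e_gt0.
have [x [x_le yx]] := yt (e / k) (divr_gt0 e_gt0 k_gt0).
exists (k *: x); rewrite linearZ -scalerBr !normrZ gtr0_norm //.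
by rewrite ler_pM2l // -ltr_pdivlMl // mulrC.
Qed.

Lemma approx_image_ball0 t y0 rho : ball y0 rho `<=` approx_image t ->
  ball 0 rho `<=` approx_image (2 * t).
Proof.
move=> sub z; rewrite -ball_normE /= sub0r normrN => z_rho e e_gt0.
have e2_gt0 : 0 < e / 2 by rewrite divr_gt0.
have y0_in : approx_image t y0.
  by apply/sub/ballxx; apply: le_lt_trans z_rho.
have y0z_in : approx_image t (y0 + z).
  by apply: sub; rewrite -ball_normE /= opprD addNKr normrN.
have [x1 [x1_le y0z_x1]] := y0z_in _ e2_gt0.
have [x2 [x2_le y0_x2]] := y0_in _ e2_gt0.
exists (x1 - x2); split; first by apply: le_trans (ler_normB _ _) _; lra.
have -> : z - T (x1 - x2) = (y0 + z - T x1) - (y0 - T x2).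
  by rewrite linearB [y0 + z]addrC addrAC addrKA opprB opprK addrA.
by apply: le_lt_trans (ler_normB _ _) _; lra.
Qed.

Lemma approx_image_norm t rho : 0 <= t -> 0 < rho ->
  ball 0 rho `<=` approx_image t -> forall y, approx_image (2 * t / rho * `|y|) y.
Proof.
move=> t_ge0 rho_gt0 sub y; have [->|y_neq0] := eqVneq y 0.
  by rewrite normr0 mulr0; exact: approx_image0.
have y_gt0 : 0 < `|y| by rewrite normr_gt0.
pose k := rho / (2 * `|y|); have k_gt0 : 0 < k by rewrite divr_gt0 ?mulr_gt0.
have ky_in : approx_image t (k *: y).
  apply: sub; rewrite -ball_normE /= sub0r normrN normrZ gtr0_norm //.
  have -> : k * `|y| = rho / 2 by rewrite /k; field; rewrite gt_eqF.
  lra.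
have kV_gt0 : 0 < k^-1 by rewrite invr_gt0.
have := approx_imageZ kV_gt0 ky_in.
rewrite scalerA mulVf ?gt_eqF // scale1r; congr (approx_image _ y).
by rewrite /k invf_div; field; rewrite !gt_eqF.
Qed.

Lemma approx_image_interior : (forall y, exists x, T x = y) ->
  exists n y0 rho, 0 < rho /\ ball y0 rho `<=` approx_image n%:R.
Proof.
move=> T_surj.
have [n not_dense] : exists n, ~ dense (~` approx_image n%:R).
  apply: contrapT => all_dense.
  have open_dense n : open (~` approx_image n%:R) /\ dense (~` approx_image n%:R).
    split; first exact/closed_openC/approx_image_closed.
    by apply: contrapT => ?; apply: all_dense; exists n.
  have [y [_ y_in]] := @Baire R X _ open_dense setT (ex_intro _ 0 I) openT.
  have [x Tx_y] := T_surj y; rewrite -Tx_y in y_in.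
  apply: (y_in (Num.truncn `|x|).+1 I) => e e_gt0; exists x.
  by rewrite subrr normr0; split => //; exact/ltW/truncnS_gt.
have [B [[y0 [B_open By0]] B_sub]] := denseNE not_dense.
have [rho rho_gt0 ball_B] := (nbhs_ballP _ _).1 (open_nbhs_nbhs (conj B_open By0)).
exists n, y0, rho; split => // z /ball_B Bz.
by apply: contrapT => z_out; rewrite -[False]/(set0 z) -B_sub.
Qed.

Lemma open_mapping_approx : (forall y, exists x, T x = y) ->
  exists C, 0 <= C /\
    forall y, exists x, `|x| <= C * `|y| /\ `|y - T x| <= `|y| / 2.
Proof.
move=> /approx_image_interior [n [y0 [rho [rho_gt0 /approx_image_ball0 sub]]]].
have t_ge0 : 0 <= 2 * n%:R :> R by rewrite mulr_ge0.
exists (2 * (2 * n%:R) / rho); split; first by rewrite divr_ge0 ?(mulr_ge0 _ t_ge0) ?ltW.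
move=> y; have [->|y_neq0] := eqVneq y 0.
  by exists 0; rewrite linear0 subrr !normr0 mulr0 mul0r.
have /(_ (`|y| / 2)) [|x [x_le yx]] := approx_image_norm t_ge0 rho_gt0 sub y.
  by rewrite divr_gt0 ?normr_gt0.
by exists x; split => //; exact: ltW.
Qed.

End OpenMapping.

Section Perturbation.
Variables (R : realType) (X : completeNormedModType R) (T : {linear X -> X}).
Variable M : R.
Hypothesis T_bounded : forall x, `|T x| <= M * `|x|.
Hypothesis T_surj : forall y, exists x, T x = y.

Lemma bounded_inverse : injective T ->
  exists A, 0 <= A /\ forall x, `|x| <= A * `|T x|.
Proof.
move=> T_inj; have [C [C_ge0 approx]] := open_mapping_approx T_surj.
exists (2 * C); split; first by rewrite mulr_ge0.
move=> x; have [x' [Tx' x'_le]] := successive_approximation T_bounded C_ge0 approx (T x).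
by move: x'_le; rewrite (T_inj _ _ Tx').
Qed.

Variables (K : {linear X -> X}) (A d : R).
Hypotheses (A_ge0 : 0 <= A) (d_ge0 : 0 <= d).
Hypothesis T_lower : forall x, `|x| <= A * `|T x|.
Hypothesis K_small : forall x, `|K x| <= d * `|x|.
Hypothesis Ad_le : A * d <= 2^-1.

Lemma perturbation_injective : injective (T \+ K).
Proof.
move=> x y /eqP; rewrite -subr_eq0 -linearB /= addr_eq0 => /eqP TK0.
apply/eqP; rewrite -subr_eq0 -normr_le0.
set z := x - y in TK0 *.
have : `|z| <= A * d * `|z|.
  by apply: le_trans (T_lower z) _; rewrite TK0 normrN -mulrA ler_wpM2l.
have : 0 <= (2^-1 - A * d) * `|z| by rewrite mulr_ge0 ?subr_ge0.
lra.
Qed.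

Lemma perturbation_surjective : forall y, exists x, (T \+ K) x = y.
Proof.
have TK_bounded x : `|(T \+ K) x| <= (M + d) * `|x|.
  by rewrite mulrDl (le_trans (ler_normD _ _)) ?lerD.
have approx y : exists x, `|x| <= A * `|y| /\ `|y - (T \+ K) x| <= `|y| / 2.
  have [x Tx_y] := T_surj y; exists x; rewrite -Tx_y; split=> //=.
  rewrite opprD addNKr normrN (le_trans (K_small x)) //.
  have : 0 <= (2^-1 - A * d) * `|T x| by rewrite mulr_ge0 ?subr_ge0.
  have : d * `|x| <= d * (A * `|T x|) by rewrite ler_wpM2l.
  lra.
move=> y; have [x [TKx _]] := successive_approximation TK_bounded A_ge0 approx y.
by exists x.
Qed.

End Perturbation.

Section ComplexOperators.
Variables (R : realType) (V : completeNormedModType R[i]).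

Lemma realify_linear (U : V -> V) : linear U -> linear (U : realify V -> realify V).
Proof. by move=> U_lin r x y; exact: U_lin. Qed.

Definition realify_op (U : V -> V) (U_lin : linear U) :
  {linear realify V -> realify V} := linear_pack (realify_linear U_lin).

Lemma realify_bounded (U : V -> V) (M : R[i]) :
  (forall x, `|U x| <= M * `|x|) ->
  forall x : realify V, `|U x : realify V| <= complex.Re M * `|x|.
Proof.
move=> U_le x; rewrite !realify_normE.
have := U_le x; rewrite -!rnormE lecE => /andP[_].
by case: M {U_le} => a b; rewrite /= mulr0 subr0.
Qed.

Lemma bounded_linear_op_inverse (U : V -> V) :
  bounded_linear_op U -> bijective U ->
  exists A, 0 <= A /\ forall x, rnorm x <= A * rnorm (U x).
Proof.
move=> [U_lin [M U_le]] U_bij.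
have U_surj y : exists x, U x = y by case: U_bij => Ui _ UiK; exists (Ui y).
exact: (bounded_inverse (T := realify_op U_lin) (realify_bounded U_le) U_surj
  (bij_inj U_bij)).
Qed.

Lemma bounded_linear_op_perturb (U K : V -> V) (A d : R) :
  bounded_linear_op U -> bijective U ->
  0 <= A -> (forall x, rnorm x <= A * rnorm (U x)) ->
  linear K -> 0 <= d -> (forall x, rnorm (K x) <= d * rnorm x) ->
  A * d <= 2^-1 ->
  bounded_linear_op (U \+ K) /\ bijective (U \+ K).
Proof.
move=> [U_lin [M U_le]] U_bij A_ge0 U_lower K_lin d_ge0 K_le Ad_le.
have U_surj y : exists x, U x = y by case: U_bij => Ui _ UiK; exists (Ui y).
pose T := realify_op U_lin; pose Kr := realify_op K_lin.
split; last first.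
  apply: inj_surj_bijective.
    exact: (perturbation_injective (T := T) (K := Kr) A_ge0 U_lower K_le Ad_le).
  move=> y; have [x TKx] := perturbation_surjective (T := T) (K := Kr)
    (realify_bounded U_le) U_surj A_ge0 d_ge0 U_lower K_le Ad_le y.
  by exists x.
split=> [a x y | ]; first by rewrite /= U_lin K_lin scalerDr addrACA.
exists (complex.Re M + d)%:C => x; rewrite -!rnormE -rmorphM lecR mulrDl.
apply: le_trans (rnormD _ _) _; rewrite lerD ?K_le //.
exact: (realify_bounded U_le x).
Qed.

End ComplexOperators.

Section MixedFrameOperator.
Variables (R : realType) (V : completeNormedModType R[i]) (ip : V -> V -> R[i]).
Hypothesis ip_inner : inner_product ip.
Variables (w d : nat -> V) (delta : R).
Hypothesis w_bessel : forall x N, \sum_(n < N) `|ip x (w n)| ^+ 2 <= `|x| ^+ 2.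
Hypothesis d_small : forall N, \sum_(n < N) rnorm (d n) ^+ 2 <= delta ^+ 2.

Definition mixed_term (x : V) (n : nat) : realify V := ip x (w n) *: d n.

Definition mixed_frame_op (x : V) : V := limn (series (mixed_term x)).

Lemma w_bessel_real x N : \sum_(n < N) rnorm (ip x (w n)) ^+ 2 <= rnorm x ^+ 2.
Proof.
rewrite -lecR rmorph_sum /= rmorphXn /= rnormE.
under eq_bigr do rewrite rmorphXn /= rnormE.
exact: w_bessel.
Qed.

Lemma mixed_normed_series_le x s N : 0 < s ->
  [normed series (mixed_term x)] N <= (s * rnorm x ^+ 2 + s^-1 * delta ^+ 2) / 2.
Proof.
move=> s_gt0; apply: (@le_trans _ _ (\sum_(0 <= n < N)
    (s * rnorm (ip x (w n)) ^+ 2 + s^-1 * rnorm (d n) ^+ 2) / 2)).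
  by apply: ler_sum_nat => n _; rewrite /= realify_normE rnormZ mul_le_weighted_sqr.
rewrite -mulr_suml big_split /= -!mulr_sumr !big_mkord ler_wpM2r ?invr_ge0 //.
by apply: lerD; apply: ler_wpM2l; rewrite ?w_bessel_real ?d_small ?invr_ge0 ?ltW.
Qed.

Lemma mixed_normed_cvg x : cvgn [normed series (mixed_term x)].
Proof.
apply: nondecreasing_is_cvgn.
  by apply: nondecreasing_series => n _ _; exact: normr_ge0.
exists ((1 * rnorm x ^+ 2 + 1^-1 * delta ^+ 2) / 2) => _ [N _ <-].
exact: mixed_normed_series_le.
Qed.

Lemma mixed_series_cvg x : cvgn (series (mixed_term x)).
Proof. by apply: normed_cvg; exact: mixed_normed_cvg. Qed.

Lemma mixed_frame_op_eq0 x : (forall n, ip x (w n) = 0) -> mixed_frame_op x = 0.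
Proof.
move=> x_orth; apply: (@lim_near_cst _ (@norm_hausdorff _ (realify V))).
apply: nearW => N.
by rewrite /series /= big1 // => n _; rewrite /mixed_term x_orth scale0r.
Qed.

Lemma mixed_frame_op_le x : 0 < delta ->
  rnorm (mixed_frame_op x) <= delta * rnorm x.
Proof.
move=> delta_gt0; have [x0|x_neq0] := eqVneq (rnorm x) 0.
  rewrite x0 mulr0 mixed_frame_op_eq0 => [|n]; last by rewrite (rnorm_eq0 x0) ip0l.
  by rewrite /rnorm normr0.
have x_gt0 : 0 < rnorm x by rewrite lt0r x_neq0 rnorm_ge0.
(* Cauchy-Schwarz for the series, via the weighted bound with s = delta / |x|. *)
have s_gt0 : 0 < delta / rnorm x by rewrite divr_gt0.
rewrite -realify_normE /mixed_frame_op.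
apply: (le_trans (lim_series_norm (@mixed_normed_cvg x))).
apply: limr_le; first exact: mixed_normed_cvg.
apply: nearW => N; apply: (le_trans (mixed_normed_series_le x N s_gt0)).
suff -> : (delta / rnorm x * rnorm x ^+ 2 + (delta / rnorm x)^-1 * delta ^+ 2) / 2
  = delta * rnorm x by [].
by rewrite invf_div; field; rewrite !gt_eqF.
Qed.

Lemma mixed_frame_op_linear : linear mixed_frame_op.
Proof.
move=> a x y; pose Sa := realify_op (@scale_linear _ V a).
have Sa_bounded v : `|Sa v| <= rnorm a * `|v| by rewrite !realify_normE rnormZ.
have series_lin N : series (mixed_term (a *: x + y)) N =
    (a *: (series (mixed_term x) N : V) : realify V) + series (mixed_term y) N.
  rewrite /series /= scaler_sumr -big_split; apply: eq_bigr => n _.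
  by rewrite /mixed_term ipPl // scalerDl scalerA.
rewrite /mixed_frame_op; apply: (@cvg_lim _ (@norm_hausdorff _ (realify V))).
rewrite (funext series_lin); apply: cvgD; last exact: mixed_series_cvg.
have Sa_cont := bounded_linear_cont Sa_bounded.
exact: (continuous_cvg _ (Sa_cont _) (@mixed_series_cvg x)).
Qed.

Lemma mixed_frame_op_orthonormal n :
  (forall k, ip (w n) (w k) = (k == n)%:R) -> mixed_frame_op (w n) = d n.
Proof.
move=> wn_on; apply: (@lim_near_cst _ (@norm_hausdorff _ (realify V))).
exists n.+1 => // N /= nN.
rewrite /series /= (bigD1_seq n) ?mem_index_iota ?iota_uniq //=.
rewrite /mixed_term wn_on eqxx scale1r big1_seq ?addr0 // => k /andP[kn _].
by rewrite wn_on (negbTE kn) scale0r.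
Qed.

End MixedFrameOperator.

Section PrIndexExtend.
Variables (sigma : seq nat) (m N0 : nat).

Definition pr_moved : seq nat := [seq n <- iota 0 N0 | n \notin sigma].

Local Notation sigma' := (sigma ++ iota 0 N0).
Local Notation m' := (m + size pr_moved)%N.

Lemma notin_extend n : n \notin sigma' -> n \notin sigma.
Proof. by rewrite mem_cat negb_or => /andP[]. Qed.

Lemma notin_extend_ge n : n \notin sigma' -> (N0 <= n)%N.
Proof. by rewrite mem_cat mem_iota add0n negb_or -leqNgt => /andP[]. Qed.

Lemma pr_moved_notin (j : 'I_(size pr_moved)) : nth 0%N pr_moved j \notin sigma.
Proof. by have := mem_nth 0%N (ltn_ord j); rewrite mem_filter => /andP[]. Qed.

(* The indices n < N0 outside sigma are moved from the sequence part to the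
   finite part, after the m old finite indices. *)
Definition extend_index (k : pr_index sigma' m') : pr_index sigma m :=
  match k with
  | inl n => inl (exist _ (val n) (notin_extend (valP n)))
  | inr j => match fintype.split j with
             | inl j1 => inr j1
             | inr j2 => inl (exist _ (nth 0%N pr_moved j2) (pr_moved_notin j2))
             end
  end.

Lemma extend_index_inj : injective extend_index.
Proof.
have moved_uniq : uniq pr_moved by rewrite filter_uniq ?iota_uniq.
have old_new (n : {n | n \notin sigma'}) (j : 'I_(size pr_moved)) :
    val n <> nth 0%N pr_moved j.
  move=> nj; have := valP n; rewrite nj mem_cat.
  by have := mem_nth 0%N (ltn_ord j); rewrite mem_filter => /andP[_ ->]; rewrite orbT.
case=> [n|j] [n'|j'] /=.
- by case=> nn'; congr inl; apply: val_inj.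
- by case: (fintype.split j') => // j2 [/old_new].
- by case: (fintype.split j) => // j2 [/esym/old_new].
- case ej: (fintype.split j) => [j1|j2]; case ej': (fintype.split j') => [j1'|j2'] // [e].
    by rewrite -(splitK j) -(splitK j') ej ej' e.
  suff j22' : j2 = j2' by rewrite -(splitK j) -(splitK j') ej ej' j22'.
  by apply/val_inj/eqP; rewrite -(nth_uniq 0%N _ _ moved_uniq) ?ltn_ord ?e.
Qed.

Lemma extend_index_inr j : extend_index (inr j) =
  match fintype.split j with
  | inl j1 => inr j1
  | inr j2 => inl (exist _ (nth 0%N pr_moved j2) (pr_moved_notin j2))
  end.
Proof. by []. Qed.

Lemma extend_index_surj i : exists k, extend_index k = i.
Proof.
case: i => [[n n_notin]|j1]; last first.
  by exists (inr (unsplit (inl j1))); rewrite extend_index_inr unsplitK.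
have [n_moved|n_new] := boolP (n \in iota 0 N0).
  have n_idx : (index n pr_moved < size pr_moved)%N.
    by rewrite index_mem mem_filter n_notin.
  exists (inr (unsplit (inr (Ordinal n_idx)))).
  rewrite extend_index_inr unsplitK; congr inl; apply: val_inj.
  by rewrite /= nth_index // mem_filter n_notin.
have n_notin' : n \notin sigma' by rewrite mem_cat negb_or n_notin.
by exists (inl (exist _ n n_notin')); congr inl; apply: val_inj.
Qed.

End PrIndexExtend.

Section RieszBasis.
Variables (R : realType) (V : completeNormedModType R[i]) (ip : V -> V -> R[i]).

Lemma orthonormal_basis_comp (I J : eqType) (u : I -> V) (phi : J -> I) :
  bijective phi -> orthonormal_basis ip u -> orthonormal_basis ip (u \o phi).
Proof.
move=> [psi phiK psiK] [u_on u_dense]; split=> [i j|].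
  by rewrite /= u_on (inj_eq (can_inj phiK)).
apply/seteqP; split=> // x _; have : closure (lin_span u) x by rewrite u_dense.
apply: closureS => _ [s [c ->]]; exists (map psi s), (c \o phi).
by rewrite big_map; apply: eq_bigr => i _ /=; rewrite psiK.
Qed.

Lemma riesz_basis_comp (I J : eqType) (e : I -> V) (phi : J -> I) :
  bijective phi -> riesz_basis ip e -> riesz_basis ip (e \o phi).
Proof.
move=> phi_bij [u [U [u_onb U_blo U_bij e_eq]]].
exists (u \o phi), U; split=> //; last by move=> j; exact: e_eq.
exact: orthonormal_basis_comp.
Qed.

Lemma pr_family_eq (f g : nat -> V) sigma m h :
  (forall n, n \notin sigma -> f n = g n) ->
  @pr_family _ _ f sigma m h = @pr_family _ _ g sigma m h.
Proof. by move=> fg; apply: funext => -[n|j] //=; exact: fg (svalP n). Qed.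

Lemma riesz_basis_pr_extend (f : nat -> V) sigma m h N0 :
  riesz_basis ip (@pr_family _ _ f sigma m h) ->
  exists h', riesz_basis ip
    (@pr_family _ _ f (sigma ++ iota 0 N0) (m + size (pr_moved sigma N0)) h').
Proof.
pose e := @pr_family _ _ f sigma m h; pose phi := @extend_index sigma m N0.
move=> e_riesz; exists (fun j => e (phi (inr j))).
have -> : @pr_family _ _ f (sigma ++ iota 0 N0) _ (fun j => e (phi (inr j)))
    = e \o phi by apply: funext => -[n|j].
apply: riesz_basis_comp e_riesz.
exact: inj_surj_bijective (@extend_index_inj _ _ _) (@extend_index_surj _ _ _).
Qed.

End RieszBasis.

Section PrCoordinates.
Variables (R : realType) (V : completeNormedModType R[i]) (ip : V -> V -> R[i]).
Hypothesis ip_inner : inner_product ip.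
Variables (sigma : seq nat) (m : nat) (u : pr_index sigma m -> V).
Hypothesis u_on : forall i j, ip (u i) (u j) = (i == j)%:R.

Definition pr_coord (n : nat) : V :=
  if (insub n : option {n | n \notin sigma}) is Some k then u (inl k) else 0.

Lemma pr_coordE (n : {n | n \notin sigma}) : pr_coord (sval n) = u (inl n).
Proof. by rewrite /pr_coord valK. Qed.

Lemma ip_pr_coord i k :
  ip (u i) (pr_coord k) = if i is inl n then (k == sval n)%:R else 0.
Proof.
rewrite /pr_coord; case: insubP => [k' _ <-|k_in]; last first.
  rewrite (ip0r ip_inner); case: i => // n.
  suff -> : (k == sval n) = false by [].
  by apply: contraNF k_in => /eqP ->; exact: svalP n.
by rewrite u_on; case: i => // n; rewrite eq_sym.
Qed.

Lemma pr_coord_bessel x N :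
  \sum_(n < N) `|ip x (pr_coord n)| ^+ 2 <= `|x| ^+ 2.
Proof.
rewrite -(big_mkord xpredT (fun n => `|ip x (pr_coord n)| ^+ 2)).
rewrite (bigID (mem sigma)) /= big1 ?add0r => [|n n_in]; last first.
  by rewrite /pr_coord insubF ?(ip0r ip_inner) ?normr0 ?expr0n // n_in.
rewrite -(big_filter (index_iota 0 N)); apply: bessel_ineq => //.
  by rewrite filter_uniq ?iota_uniq.
move=> i j; rewrite !mem_filter => /andP[i_notin _] /andP[j_notin _].
by rewrite (pr_coordE (exist _ i i_notin)) ip_pr_coord eq_sym.
Qed.

End PrCoordinates.

Lemma riesz_basis_perturb (R : realType) (V : completeNormedModType R[i])
    (ip : V -> V -> R[i]) (f : nat -> V) sigma m h :
  inner_product ip -> riesz_basis ip (@pr_family _ _ f sigma m h) ->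
  exists2 delta : R, 0 < delta & forall d : nat -> V,
    (forall N, \sum_(n < N) rnorm (d n) ^+ 2 <= delta ^+ 2) ->
    riesz_basis ip (@pr_family _ _ (f \+ d) sigma m h).
Proof.
move=> ip_inner [u [U [[u_on u_dense] U_blo U_bij f_eq]]].
have [A [A_ge0 U_lower]] := bounded_linear_op_inverse U_blo U_bij.
have A2_gt0 : 0 < 2 * A + 2 by lra.
have delta_gt0 : 0 < (2 * A + 2)^-1 by rewrite invr_gt0.
have Ad_le : A * (2 * A + 2)^-1 <= 2^-1 by rewrite ler_pdivrMr //; lra.
exists (2 * A + 2)^-1 => // d d_small.
have w_bessel := pr_coord_bessel ip_inner u_on.
pose K := mixed_frame_op ip (pr_coord u) d.
have K_inl n : K (u (inl n)) = d (sval n).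
  rewrite -pr_coordE; apply: mixed_frame_op_orthonormal => k.
  by rewrite pr_coordE ip_pr_coord.
have K_inr j : K (u (inr j)) = 0.
  by apply: mixed_frame_op_eq0 => k; rewrite ip_pr_coord.
have K_le x := mixed_frame_op_le ip_inner w_bessel d_small x delta_gt0.
have [UK_blo UK_bij] := bounded_linear_op_perturb U_blo U_bij A_ge0 U_lower
  (mixed_frame_op_linear ip_inner w_bessel d_small) (ltW delta_gt0) K_le Ad_le.
exists u, (U \+ K); split=> // -[n|j] /=; rewrite -f_eq /=.
  by rewrite K_inl.
by rewrite K_inr addr0.
Qed.

Theorem mainTheorem10 (R : realType) (V : completeNormedModType R[i])
  (ip : V -> V -> R[i]) (f g : nat -> V) :
  inner_product ip -> separable V ->
  pseudo_riesz_basis ip f ->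
  (exists M : R[i], forall N : nat, \sum_(n < N) `|f n - g n| ^+ 2 <= M) ->
  pseudo_riesz_basis ip g.
Proof.
move=> ip_inner _ [f_bessel [sigma [m [h f_riesz]]]] fg_sq.
split; first exact: bessel_seq_perturb fg_sq.
have [delta delta_gt0 f_perturb] := riesz_basis_perturb ip_inner f_riesz.
have [M fg_le] := fg_sq.
have fg_le_real N : \sum_(n < N) rnorm (f n - g n) ^+ 2 <= complex.Re M.
  exact: (sum_rnorm_sqr_le (x := fun n => f n - g n) (fg_le N)).
have [N0 fg_tail] := bounded_series_tail (fun n => exprn_ge0 2 (rnorm_ge0 (f n - g n)))
  fg_le_real (exprn_gt0 2 delta_gt0).
pose d n := if (N0 <= n)%N then g n - f n else 0.
have /f_perturb fd_riesz N : \sum_(n < N) rnorm (d n) ^+ 2 <= delta ^+ 2.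
  apply: le_trans (fg_tail N); apply: ler_sum => n _; rewrite /d.
  by case: ifP => _; rewrite ?rnorm0 ?expr2 ?mulr0 // -opprB rnormN.
have [h' fd_riesz'] := riesz_basis_pr_extend N0 fd_riesz.
exists (sigma ++ iota 0 N0), _, h'.
rewrite -(@pr_family_eq _ _ (f \+ d)) // => n n_notin.
by rewrite /= /d (notin_extend_ge n_notin) addrC subrK.
Qed.
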